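(* Let $\lambda\in P_I^+$ and $\mu\in P$ with $\mu<_\emptyset\lambda$. Then $w\mu<_\emptyset\lambda$ for every $w\in W_{I,\lambda}$.
   Context: Let $\mathfrak a$ be a Euclidean space with inner product $(\cdot,\cdot)$, $R\subset\mathfrak a^*$ a root system with Weyl group $W$, positive roots $R^+$, simple roots $\Pi$, simple reflections $S$, and Bruhat order $\le_W$ on $W$. Let $P$ be the weight lattice, $P^+$ the dominant weights, and $Q^+=\{\sum_{\alpha\in\Pi}n_\alpha\alpha: n_\alpha\in\mathbb Z_{\ge0}\}$; write $\lambda\preceq\mu$ iff $\mu-\lambda\in Q^+$. For $\lambda\in P$ let $\lambda_+$ be the unique element of $W\lambda\cap P^+$ and $\overline v(\lambda)$ the minimal length element of $W$ with $\overline v(\lambda)\lambda_+=\lambda$. Define a partial order on $P$: $\lambda\le_\emptyset\mu$ iff $\lambda_+\preceq\mu_+$ and, in case $\lambda_+=\mu_+$, $\overline v(\lambda)\le_W\overline v(\mu)$; $\lambda<_\emptyset\mu$ means $\lambda\le_\emptyset\mu$ and $\lambda\neq\mu$. Let $I\subset S$, $W_I$ the parabolic subgroup generated by $I$, $R_I^+$ its positive roots, $P_I^+=\{\lambda\in P:(\lambda,\alpha)\ge0\ \forall\alpha\in R_I^+\}$, and for $\lambda\in P_I^+$ let $W_{I,\lambda}=\{w\in W_I: w\lambda=\lambda\}$. *)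

From HB Require Import structures.
From mathcomp Require Import all_boot all_order all_algebra.
From mathcomp Require Import reals.
From Stdlib Require Import Relations ClassicalEpsilon.
Set Implicit Arguments. Unset Strict Implicit. Unset Printing Implicit Defensive.
Import Order.TTheory GRing.Theory Num.Theory.
Local Open Scope ring_scope.

(* The Euclidean space a is modelled as R^n (column vectors 'cV[R]_n) with the
   standard inner product; a^* is identified with a via the inner product.
   Elements of W act on the left as n x n matrices. *)
Section RootData.
Context {R : realType} {n l : nat}.

Definition dot (u v : 'cV[R]_n) : R := (u^T *m v) 0 0.

Definition refl (a : 'cV[R]_n) : 'M[R]_n := 1%:M - (2 / dot a a) *: (a *m a^T).

Definition prodr (s : seq 'cV[R]_n) : 'M[R]_n :=
  foldr (fun a M => refl a *m M) 1%:M s.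

(* crystallographic root system spanning R^n (not assumed reduced) *)
Definition root_system (Rt : seq 'cV[R]_n) : Prop :=
  [/\ (0 \notin Rt),
      (forall a b, a \in Rt -> b \in Rt -> refl a *m b \in Rt),
      (forall a b, a \in Rt -> b \in Rt -> 2 * dot b a / dot a a \is a Num.int) &
      (forall v : 'cV[R]_n, exists c : 'I_(size Rt) -> R,
          v = \sum_(i < size Rt) c i *: Rt`_i)].

Definition base (Rt : seq 'cV[R]_n) (Pi : 'I_l -> 'cV[R]_n) : Prop :=
  [/\ (forall i, Pi i \in Rt),
      (forall c : 'I_l -> R, \sum_i c i *: Pi i = 0 -> forall i, c i = 0) &
      (forall b, b \in Rt -> exists c : 'I_l -> int,
          ((forall i, 0 <= c i) \/ (forall i, c i <= 0)) /\
          b = \sum_i (c i)%:~R *: Pi i)].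

Variables (Rt : seq 'cV[R]_n) (Pi : 'I_l -> 'cV[R]_n).

Definition posroot (a : 'cV[R]_n) : Prop :=
  a \in Rt /\ exists c : 'I_l -> nat, a = \sum_i (c i)%:R *: Pi i.

Definition posrootI (I : {set 'I_l}) (a : 'cV[R]_n) : Prop :=
  a \in Rt /\ exists c : 'I_l -> nat,
    (forall i, i \notin I -> c i = 0) /\ a = \sum_i (c i)%:R *: Pi i.

Definition inW (w : 'M[R]_n) : Prop :=
  exists2 s : seq 'cV[R]_n, all (fun a => a \in Rt) s & w = prodr s.

Definition inWI (I : {set 'I_l}) (w : 'M[R]_n) : Prop :=
  exists2 s : seq 'I_l, all (fun i => i \in I) s & w = prodr (map Pi s).

Definition length_is (w : 'M[R]_n) (k : nat) : Prop :=
  (exists s : seq 'I_l, size s = k /\ w = prodr (map Pi s)) /\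
  (forall s : seq 'I_l, w = prodr (map Pi s) -> (k <= size s)%N).

Definition bruhat_step (u w : 'M[R]_n) : Prop :=
  exists a, a \in Rt /\ w = refl a *m u /\
    exists ku kw, [/\ length_is u ku, length_is w kw & (ku < kw)%N].

Definition bruhat_le : relation 'M[R]_n := clos_refl_trans _ bruhat_step.

Definition weight (lam : 'cV[R]_n) : Prop :=
  forall a, a \in Rt -> 2 * dot lam a / dot a a \is a Num.int.

Definition dominant (lam : 'cV[R]_n) : Prop :=
  weight lam /\ forall a, posroot a -> 0 <= dot lam a.

Definition Qle (lam mu : 'cV[R]_n) : Prop :=
  exists c : 'I_l -> nat, mu - lam = \sum_i (c i)%:R *: Pi i.

Definition is_plus (lam nu : 'cV[R]_n) : Prop :=
  dominant nu /\ exists2 w, inW w & w *m lam = nu.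

(* lam_+ : the (unique) element of W lam \cap P^+ *)
Definition lam_plus (lam : 'cV[R]_n) : 'cV[R]_n :=
  epsilon (inhabits 0) (is_plus lam).

Definition is_vbar (lam : 'cV[R]_n) (v : 'M[R]_n) : Prop :=
  [/\ inW v, v *m lam_plus lam = lam &
      exists k, length_is v k /\
        forall w, inW w -> w *m lam_plus lam = lam ->
          forall m, length_is w m -> (k <= m)%N].

Definition vbar (lam : 'cV[R]_n) : 'M[R]_n :=
  epsilon (inhabits 1%:M) (is_vbar lam).

Definition le0 (lam mu : 'cV[R]_n) : Prop :=
  Qle (lam_plus lam) (lam_plus mu) /\
  (lam_plus lam = lam_plus mu -> bruhat_le (vbar lam) (vbar mu)).

Definition lt0 (lam mu : 'cV[R]_n) : Prop := le0 lam mu /\ lam <> mu.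

Definition PIplus (I : {set 'I_l}) (lam : 'cV[R]_n) : Prop :=
  weight lam /\ forall a, posrootI I a -> 0 <= dot lam a.

End RootData.

From HB Require Import structures.
From mathcomp Require Import all_boot all_order all_algebra.
From mathcomp Require Import reals boolp.
From mathcomp Require Import ring lra zify.
From Stdlib Require Import Relations ClassicalEpsilon.
Set Implicit Arguments. Unset Strict Implicit. Unset Printing Implicit Defensive.
Import Order.TTheory GRing.Theory Num.Theory.
Local Open Scope ring_scope.

Section Reflections.
Variables (R : realType) (n : nat).
Implicit Types (u v a b : 'cV[R]_n) (M A B : 'M[R]_n).

Lemma dotE u v : dot u v = \sum_i u i 0 * v i 0.
Proof. by rewrite /dot !mxE; apply: eq_bigr => i _; rewrite !mxE. Qed.

Lemma dotC u v : dot u v = dot v u.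
Proof. by rewrite !dotE; apply: eq_bigr => i _; rewrite mulrC. Qed.

Lemma dotDl u v b : dot (u + v) b = dot u b + dot v b.
Proof. by rewrite !dotE -big_split; apply: eq_bigr => i _; rewrite mxE mulrDl. Qed.

Lemma dotZl c u v : dot (c *: u) v = c * dot u v.
Proof. by rewrite !dotE mulr_sumr; apply: eq_bigr => i _; rewrite mxE mulrA. Qed.

Lemma dotNl u v : dot (- u) v = - dot u v.
Proof. by rewrite -scaleN1r dotZl mulN1r. Qed.

Lemma dotBl u v b : dot (u - v) b = dot u b - dot v b.
Proof. by rewrite dotDl dotNl. Qed.

Lemma dotZr c u v : dot v (c *: u) = c * dot v u.
Proof. by rewrite !(dotC v) dotZl. Qed.

Lemma dotNr u v : dot v (- u) = - dot v u.
Proof. by rewrite !(dotC v) dotNl. Qed.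

Lemma dotBr u v b : dot b (u - v) = dot b u - dot b v.
Proof. by rewrite !(dotC b) dotBl. Qed.

Lemma dot_suml (I : finType) (F : I -> 'cV[R]_n) v :
  dot (\sum_i F i) v = \sum_i dot (F i) v.
Proof.
elim/big_rec2: _ => [|i x y _ <-]; last by rewrite dotDl.
by rewrite -(scale0r 0) dotZl mul0r.
Qed.

Lemma dot_sumr (I : finType) (F : I -> 'cV[R]_n) v :
  dot v (\sum_i F i) = \sum_i dot v (F i).
Proof. by rewrite dotC dot_suml; apply: eq_bigr => i _; rewrite dotC. Qed.

Lemma dot_ge0 u : 0 <= dot u u.
Proof. by rewrite dotE; apply: sumr_ge0 => i _; rewrite -expr2 sqr_ge0. Qed.

Lemma dot_gt0 u : u != 0 -> 0 < dot u u.
Proof.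
move=> nz; rewrite lt_def dot_ge0 andbT; apply: contra nz; rewrite dotE => /eqP u0.
apply/eqP/matrixP => i j; rewrite ord1 mxE; apply/eqP; rewrite -[_ == 0]orbb -mulf_eq0.
by apply/eqP/(psumr_eq0P _ u0) => // k _; rewrite -expr2 sqr_ge0.
Qed.

Lemma dotMl M u v : dot (M *m u) v = dot u (M^T *m v).
Proof. by rewrite /dot trmx_mul mulmxA. Qed.

Lemma dotMr M u v : dot u (M *m v) = dot (M^T *m u) v.
Proof. by rewrite dotMl trmxK. Qed.

Lemma mx_ext A B : (forall v : 'cV[R]_n, A *m v = B *m v) -> A = B.
Proof.
move=> AB; apply/matrixP => i j.
have := congr1 (fun M : 'cV[R]_n => M i 0) (AB (delta_mx j 0)).
by rewrite -!colE !mxE.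
Qed.

Lemma reflE a v : refl a *m v = v - (2 / dot a a * dot a v) *: a.
Proof.
rewrite /refl mulmxBl mul1mx -scalemxAl -mulmxA.
by rewrite [a^T *m v]mx11_scalar mul_mx_scalar scalerA.
Qed.

Lemma refl_root a : a != 0 -> refl a *m a = - a.
Proof.
move=> nz; rewrite reflE mulrAC -mulrA divff ?gt_eqF ?dot_gt0 // mulr1.
by rewrite -[X in X - _]scale1r -scalerBl -[2]/(1 + 1) opprD addrA subrr add0r scaleN1r.
Qed.

Lemma refl_orth_fix a v : dot a v = 0 -> refl a *m v = v.
Proof. by move=> av0; rewrite reflE av0 mulr0 scale0r subr0. Qed.

Lemma reflK a : a != 0 -> refl a *m refl a = 1%:M.
Proof.
move=> nz; apply: mx_ext => v; rewrite -mulmxA mul1mx.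
have aa0 : dot a a != 0 by rewrite gt_eqF // dot_gt0.
rewrite [refl a *m v]reflE reflE dotBr dotZr -addrA -opprD -scalerDl.
set k := 2 / dot a a.
have -> : k * dot a v + k * (dot a v - k * dot a v * dot a a) = 0 by rewrite /k; field.
by rewrite scale0r subr0.
Qed.

Lemma refl_tr a : (refl a)^T = refl a.
Proof. by rewrite /refl linearB /= trmx1 linearZ /= trmx_mul trmxK. Qed.

Lemma reflZ c a : c != 0 -> refl (c *: a) = refl a.
Proof.
move=> c0; apply: mx_ext => v.
have [->|nz] := eqVneq a 0; first by rewrite scaler0.
have aa0 : dot a a != 0 by rewrite gt_eqF // dot_gt0.
rewrite !reflE !dotZl !dotZr scalerA; congr (_ - _ *: _).
by field; rewrite aa0 c0.
Qed.

Lemma reflN a : refl (- a) = refl a.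
Proof. by rewrite -scaleN1r reflZ // oppr_eq0 oner_eq0. Qed.

Definition orthomx M := M^T *m M = 1%:M.

Lemma orthomxC M : orthomx M -> M *m M^T = 1%:M.
Proof. exact: mulmx1C. Qed.

Lemma orthomx_tr M : orthomx M -> orthomx M^T.
Proof. by move=> oM; rewrite /orthomx trmxK orthomxC. Qed.

Lemma orthomx1 : orthomx 1%:M.
Proof. by rewrite /orthomx trmx1 mul1mx. Qed.

Lemma orthomxM A B : orthomx A -> orthomx B -> orthomx (A *m B).
Proof.
by move=> oA oB; rewrite /orthomx trmx_mul mulmxA -(mulmxA _ _ A) oA mulmx1 oB.
Qed.

Lemma orthomx_refl a : a != 0 -> orthomx (refl a).
Proof. by move=> nz; rewrite /orthomx refl_tr reflK. Qed.

Lemma orthomx_dot M u v : orthomx M -> dot (M *m u) (M *m v) = dot u v.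
Proof. by move=> oM; rewrite dotMl mulmxA oM mul1mx. Qed.

Lemma orthomx_fix_tr M v : orthomx M -> M *m v = v -> M^T *m v = v.
Proof. by move=> oM Mv; rewrite -{1}Mv mulmxA oM mul1mx. Qed.

Lemma refl_conj M a : orthomx M -> refl (M *m a) = M *m refl a *m M^T.
Proof.
move=> oM; apply: mx_ext => v.
rewrite -!mulmxA (reflE (M *m a)) (reflE a) mulmxBr mulmxA orthomxC // mul1mx.
by rewrite orthomx_dot // -scalemxAr dotMl.
Qed.

End Reflections.

Section RootSystem.
Variables (R : realType) (n l : nat) (Rt : seq 'cV[R]_n) (Pi : 'I_l -> 'cV[R]_n).
Hypotheses (Rt_root_system : root_system Rt) (Pi_base : base Rt Pi).

Local Notation s i := (refl (Pi i)).
Local Notation pos := (posroot Rt Pi).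

Lemma root_neq0 a : a \in Rt -> a != 0.
Proof. by case: Rt_root_system => Rt0 _ _ _; apply: contraTneq => ->. Qed.

Lemma refl_root_in a b : a \in Rt -> b \in Rt -> refl a *m b \in Rt.
Proof. by case: Rt_root_system => _ + _ _; apply. Qed.

Lemma Pi_root i : Pi i \in Rt.
Proof. by case: Pi_base. Qed.

Lemma Pi_neq0 i : Pi i != 0.
Proof. exact/root_neq0/Pi_root. Qed.

Lemma reflK_simple i : s i *m s i = 1%:M.
Proof. exact/reflK/Pi_neq0. Qed.

Lemma orthomx_simple i : orthomx (s i).
Proof. exact/orthomx_refl/Pi_neq0. Qed.

Lemma refl_simple_root i : s i *m Pi i = - Pi i.
Proof. exact/refl_root/Pi_neq0. Qed.

Lemma simple_coord_eq0 (c : 'I_l -> R) : \sum_i c i *: Pi i = 0 -> c =1 fun=> 0.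
Proof. by case: Pi_base => _ + _; apply. Qed.

Lemma simple_coord_inj (c d : 'I_l -> R) :
  \sum_i c i *: Pi i = \sum_i d i *: Pi i -> c =1 d.
Proof.
move=> cd i; apply/eqP; rewrite -subr_eq0; apply/eqP; move: i; apply: simple_coord_eq0.
by under eq_bigr do rewrite scalerBl; rewrite sumrB cd subrr.
Qed.

Lemma sum_simple_delta (i : 'I_l) (k : R) :
  \sum_j (if j == i then k else 0) *: Pi j = k *: Pi i.
Proof. by rewrite (bigD1 i) //= eqxx big1 ?addr0 // => j /negPf ->; rewrite scale0r. Qed.

Lemma refl_simple_coord (i : 'I_l) (c : 'I_l -> R) b : b = \sum_j c j *: Pi j ->
  s i *m b =
  \sum_j (c j - if j == i then 2 / dot (Pi i) (Pi i) * dot (Pi i) b else 0) *: Pi j.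
Proof.
by move=> bE; under eq_bigr do rewrite scalerBl; rewrite sumrB sum_simple_delta reflE -bE.
Qed.

Lemma posroot_simple i : pos (Pi i).
Proof.
split; first exact: Pi_root.
exists (fun j => (j == i)%N : nat); rewrite -[LHS]scale1r -sum_simple_delta.
by apply: eq_bigr => j _; case: eqP.
Qed.

Lemma root_posVneg a : a \in Rt -> pos a \/ pos (- a).
Proof.
move=> Ra; case: Pi_base => _ _ /(_ a Ra) [c [c_sign aE]].
have natE k : (absz (c k))%:R = `|c k|%:~R :> R by rewrite -abszE.
case: c_sign => c_sign; [left|right]; (split; last exists (fun k => absz (c k))).
- exact: Ra.
- by rewrite aE; apply: eq_bigr => k _; rewrite natE ger0_norm.
- by rewrite -(refl_root (root_neq0 Ra)) refl_root_in.
- rewrite aE -sumrN; apply: eq_bigr => k _.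
  by rewrite -scaleNr natE ler0_norm // mulrNz.
Qed.

Lemma posroot_opp a : pos a -> ~ pos (- a).
Proof.
move=> [Ra [c aE]] [_ [d naE]].
have cd0 : (fun k => (c k + d k)%:R) =1 fun=> 0 :> R.
  apply: simple_coord_eq0; under eq_bigr do rewrite natrD scalerDl.
  by rewrite big_split /= -aE -naE subrr.
move/eqP: (root_neq0 Ra); apply; rewrite aE big1 // => k _.
by have /eqP := cd0 k; rewrite pnatr_eq0 addn_eq0 => /andP[/eqP -> _]; rewrite scale0r.
Qed.

Lemma posroot_refl_simple_neg i b : pos b -> pos (- (s i *m b)) ->
  exists2 c : R, c != 0 & b = c *: Pi i.
Proof.
move=> [Rb [c bE]] [_ [d sbE]].
set k := 2 / dot (Pi i) (Pi i) * dot (Pi i) b.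
have cdE : (fun j => (c j + d j)%:R) =1 fun j => if j == i then k else 0.
  apply: simple_coord_inj; rewrite sum_simple_delta.
  under eq_bigr do rewrite natrD scalerDl.
  by rewrite big_split /= -bE -sbE reflE opprB addrC subrK.
have c0 j : j != i -> c j = 0%N.
  by move=> /negPf ji; have /eqP := cdE j; rewrite ji pnatr_eq0 addn_eq0 => /andP[/eqP].
have {}bE : b = (c i)%:R *: Pi i.
  by rewrite bE (bigD1 i) //= big1 ?addr0 // => j /c0 ->; rewrite scale0r.
exists (c i)%:R => //; apply/eqP => ci0.
by move: (root_neq0 Rb); rewrite bE ci0 scale0r eqxx.
Qed.

Lemma refl_posroot_simple i b : pos b -> pos (- (s i *m b)) -> refl b = s i.
Proof. by move=> pb /(posroot_refl_simple_neg pb) [c c0 ->]; rewrite reflZ. Qed.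

Definition sprod (w : seq 'I_l) : 'M[R]_n := prodr (map Pi w).

Definition inWS (y : 'M[R]_n) := exists w, y = sprod w.

Lemma sprod_cons i w : sprod (i :: w) = s i *m sprod w.
Proof. by []. Qed.

Lemma sprod_cat w1 w2 : sprod (w1 ++ w2) = sprod w1 *m sprod w2.
Proof. by elim: w1 => [|i w1 IH]; rewrite ?mul1mx // cat_cons !sprod_cons IH mulmxA. Qed.

Lemma sprod_rcons w i : sprod (rcons w i) = sprod w *m s i.
Proof. by rewrite -cats1 sprod_cat sprod_cons mulmx1. Qed.

Lemma sprod_tr w : (sprod w)^T = sprod (rev w).
Proof.
elim: w => [|i w IH]; first exact: trmx1.
by rewrite sprod_cons trmx_mul IH refl_tr rev_cons sprod_rcons.
Qed.

Lemma orthomx_sprod w : orthomx (sprod w).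
Proof.
by elim: w => [|i w IH]; [exact: orthomx1 | exact/orthomxM/IH/orthomx_simple].
Qed.

Lemma sprod_root w b : b \in Rt -> sprod w *m b \in Rt.
Proof.
elim: w => [|i w IH] Rb; first by rewrite mul1mx.
by rewrite sprod_cons -mulmxA refl_root_in ?Pi_root ?IH.
Qed.

Lemma inWS_sprod w : inWS (sprod w).
Proof. by exists w. Qed.

Lemma inWS_simple i : inWS (s i).
Proof. by exists [:: i]; rewrite sprod_cons mulmx1. Qed.

Lemma inWS_mul y z : inWS y -> inWS z -> inWS (y *m z).
Proof. by move=> [w1 ->] [w2 ->]; exists (w1 ++ w2); rewrite sprod_cat. Qed.

Lemma inWS_tr y : inWS y -> inWS y^T.
Proof. by move=> [w ->]; exists (rev w); rewrite sprod_tr. Qed.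

Lemma orthomx_inWS y : inWS y -> orthomx y.
Proof. by move=> [w ->]; apply: orthomx_sprod. Qed.

Lemma inWS_root y b : inWS y -> b \in Rt -> y *m b \in Rt.
Proof. by move=> [w ->]; apply: sprod_root. Qed.

Lemma inWS_trK y : inWS y -> y^T *m y = 1%:M.
Proof. exact: orthomx_inWS. Qed.

Lemma inWS_mulKtr y : inWS y -> y *m y^T = 1%:M.
Proof. by move/orthomx_inWS/orthomxC. Qed.

Lemma simple_dot_gt0 (c : 'I_l -> nat) b : b != 0 -> b = \sum_i (c i)%:R *: Pi i ->
  exists j, 0 < dot (Pi j) b.
Proof.
move=> b0 bE; case: (pickP (fun j => 0 < dot (Pi j) b)) => [j|no_j]; first by exists j.
have : dot b b <= 0.
  rewrite {1}bE dot_suml; apply: sumr_le0 => j _.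
  by rewrite dotZl mulr_ge0_le0 // leNgt no_j.
by rewrite leNgt dot_gt0.
Qed.

Lemma refl_simple_height_lt (c c' : 'I_l -> nat) j b :
  b = \sum_i (c i)%:R *: Pi i -> 0 < dot (Pi j) b ->
  s j *m b = \sum_i (c' i)%:R *: Pi i -> (\sum_i c' i < \sum_i c i)%N.
Proof.
move=> bE jb sbE; rewrite (refl_simple_coord j bE) in sbE.
set k := 2 / dot (Pi j) (Pi j) * dot (Pi j) b in sbE.
have k_gt0 : 0 < k by rewrite !mulr_gt0 ?invr_gt0 ?dot_gt0 ?Pi_neq0.
have c'E := simple_coord_inj sbE.
rewrite -(ltr_nat R) !natr_sum; under eq_bigr do rewrite -c'E; rewrite sumrB.
rewrite -big_mkcond big_pred1_eq; lra.
Qed.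

Lemma refl_posroot_inWS b : pos b -> inWS (refl b).
Proof.
move=> [Rb [c bE]]; move: {2}(\sum_i c i)%N (leqnn (\sum_i c i)) => h.
elim: h b c Rb bE => [|h IH] b c Rb bE c_le.
  have := root_neq0 Rb; rewrite bE big1 ?eqxx // => i _.
  by move: c_le; rewrite leqn0 sum_nat_eq0 => /forallP/(_ i)/eqP ->; rewrite scale0r.
have [j jb] := simple_dot_gt0 (root_neq0 Rb) bE.
have sbE : refl (s j *m b) = s j *m refl b *m s j.
  by rewrite refl_conj ?refl_tr //; apply: orthomx_simple.
case: (root_posVneg (refl_root_in (Pi_root j) Rb)) => [[Rsb [c' c'E]]|sb_neg].
  have [w wE] := IH _ c' Rsb c'E (leq_trans (refl_simple_height_lt bE jb c'E) c_le).
  exists (j :: rcons w j); rewrite sprod_cons sprod_rcons -wE sbE !mulmxA.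
  by rewrite reflK_simple mul1mx -mulmxA reflK_simple mulmx1.
rewrite (refl_posroot_simple (conj Rb (ex_intro _ c bE)) sb_neg); exact: inWS_simple.
Qed.

Lemma refl_root_inWS a : a \in Rt -> inWS (refl a).
Proof.
by case/root_posVneg => [|/refl_posroot_inWS]; [exact: refl_posroot_inWS | rewrite reflN].
Qed.

Lemma inW_inWS y : inW Rt y -> inWS y.
Proof.
move=> [ss + ->]; elim: ss => [_|a ss IH /= /andP[Ra /IH]]; first by exists [::].
exact/inWS_mul/refl_root_inWS.
Qed.

Lemma inWS_inW y : inWS y -> inW Rt y.
Proof. by move=> [w ->]; exists (map Pi w) => //; apply/allP => _ /mapP[i _ ->]; apply: Pi_root. Qed.

Lemma len_exists y :
  exists k, `[< inWS y -> exists w, size w = k /\ y = sprod w >].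
Proof.
have [[w ->]|yNW] := pselect (inWS y).
  by exists (size w); apply/asboolP => _; exists w.
by exists 0%N; apply/asboolP.
Qed.

Definition len y := ex_minn (len_exists y).

Lemma reduced_word y : inWS y -> exists w, size w = len y /\ y = sprod w.
Proof. by rewrite /len; case: ex_minnP => k /asboolP. Qed.

Lemma len_sprod w : (len (sprod w) <= size w)%N.
Proof. by rewrite /len; case: ex_minnP => k _; apply; apply/asboolP => _; exists w. Qed.

Lemma length_is_len y : inWS y -> length_is Pi y (len y).
Proof.
move=> Wy; split; first exact: reduced_word.
by move=> w ->; apply: len_sprod.
Qed.

Lemma length_is_eq y k : length_is Pi y k -> k = len y.
Proof.
move=> [[w [<- yE]] k_min]; apply/eqP; rewrite eqn_leq {2}yE len_sprod andbT.
by have [w' [<- yE']] := reduced_word (ex_intro _ w yE); apply: k_min.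
Qed.

Lemma length_is_inWS y k : length_is Pi y k -> inWS y.
Proof. by move=> [[w [_ ->]] _]; exists w. Qed.

Lemma len_eq0 y : inWS y -> len y = 0%N -> y = 1%:M.
Proof. by move=> /reduced_word[[|i w] [<- ->]]. Qed.

Lemma exchange b w : pos b -> pos (- ((sprod w)^T *m b)) ->
  exists w1 i w2, w = w1 ++ i :: w2 /\ refl b *m sprod w = sprod (w1 ++ w2).
Proof.
elim: w b => [|i w IH] b pb; first by rewrite trmx1 mul1mx => /(posroot_opp pb).
rewrite sprod_cons trmx_mul refl_tr -mulmxA.
have [psb|nsb] := root_posVneg (refl_root_in (Pi_root i) pb.1); last first.
  by exists [::], i, w; rewrite (refl_posroot_simple pb nsb) mulmxA reflK_simple mul1mx.
move=> /(IH _ psb) [w1 [j [w2 [-> sbE]]]]; exists (i :: w1), j, w2; split => //.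
have sbsE : refl (s i *m b) = s i *m refl b *m s i.
  by rewrite refl_conj ?refl_tr //; apply: orthomx_simple.
by rewrite cat_cons sprod_cons -sbE sbsE !mulmxA reflK_simple mul1mx.
Qed.

Lemma len_refl_lt b y : pos b -> inWS y -> pos (- (y^T *m b)) ->
  (len (refl b *m y) < len y)%N.
Proof.
move=> pb /reduced_word[w [<- ->]] /(exchange pb) [w1 [i [w2 [-> ->]]]].
by apply: leq_ltn_trans (len_sprod _) _; rewrite !size_cat /= addnS.
Qed.

Lemma len_refl_gt b y : pos b -> inWS y -> pos (y^T *m b) ->
  (len y < len (refl b *m y))%N.
Proof.
move=> pb Wy pyb; have Wby := inWS_mul (refl_posroot_inWS pb) Wy.
have {1}-> : y = refl b *m (refl b *m y) by rewrite mulmxA reflK ?mul1mx ?root_neq0 ?pb.1.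
apply: len_refl_lt => //.
by rewrite trmx_mul refl_tr -mulmxA refl_root ?root_neq0 ?pb.1 // mulmxN opprK.
Qed.

Lemma posroot_refl a : a \in Rt -> exists2 b, pos b & refl a = refl b.
Proof. by case/root_posVneg => pa; [exists a | exists (- a); rewrite ?reflN]. Qed.

Lemma len_refl_neq a y : a \in Rt -> inWS y -> len (refl a *m y) != len y.
Proof.
move=> /posroot_refl[b pb ->] Wy.
case: (root_posVneg (inWS_root (inWS_tr Wy) pb.1)) => pyb.
  by rewrite gtn_eqF // len_refl_gt.
by rewrite ltn_eqF // len_refl_lt.
Qed.

Lemma len_refl_lt_neg b y : pos b -> inWS y -> (len (refl b *m y) < len y)%N ->
  pos (- (y^T *m b)).
Proof.
move=> pb Wy; case: (root_posVneg (inWS_root (inWS_tr Wy) pb.1)) => // pyb.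
by rewrite ltnNge ltnW // len_refl_gt.
Qed.

Lemma len_mull_simple_le i y : inWS y -> (len (s i *m y) <= (len y).+1)%N.
Proof. by move=> /reduced_word[w [<- ->]]; rewrite -sprod_cons len_sprod. Qed.

Lemma len_mulr_simple_le i y : inWS y -> (len (y *m s i) <= (len y).+1)%N.
Proof.
by move=> /reduced_word[w [<- ->]]; rewrite -sprod_rcons -(size_rcons w i) len_sprod.
Qed.

Lemma mulr_simple_conj y j : inWS y -> y *m s j = refl (y *m Pi j) *m y.
Proof.
move=> Wy; rewrite (refl_conj _ (orthomx_inWS Wy)) -mulmxA.
by rewrite (orthomx_inWS Wy) mulmx1.
Qed.

Lemma len_mulr_simple i y : inWS y ->
  len (y *m s i) = (len y).+1 \/ len y = (len (y *m s i)).+1.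
Proof.
move=> Wy; have Wys := inWS_mul Wy (inWS_simple i).
have le_ys := len_mulr_simple_le i Wy.
have := len_mulr_simple_le i Wys; rewrite -mulmxA reflK_simple mulmx1 => le_y.
have := len_refl_neq (inWS_root Wy (Pi_root i)) Wy; rewrite -mulr_simple_conj //.
by case: ltngtP => // [lt|gt] _; [right|left]; apply/eqP; rewrite eqn_leq ?lt ?gt andbT.
Qed.

Lemma len_mulr_simple_gt y j : inWS y -> pos (y *m Pi j) -> (len y < len (y *m s j))%N.
Proof.
move=> Wy pyj; rewrite mulr_simple_conj //; apply: len_refl_gt => //.
by rewrite mulmxA inWS_trK // mul1mx; apply: posroot_simple.
Qed.

Lemma len_mulr_simple_lt y j : inWS y -> pos (- (y *m Pi j)) ->
  (len (y *m s j) < len y)%N.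
Proof.
move=> Wy nyj; rewrite mulr_simple_conj // -reflN; apply: len_refl_lt => //.
by rewrite mulmxN mulmxA inWS_trK // mul1mx opprK; apply: posroot_simple.
Qed.

Lemma posroot_len_mulr_simple y j : inWS y -> (len y < len (y *m s j))%N ->
  pos (y *m Pi j).
Proof.
move=> Wy; case: (root_posVneg (inWS_root Wy (Pi_root j))) => // nyj.
by rewrite ltnNge ltnW // len_mulr_simple_lt.
Qed.

Lemma len_mull_simple_gt y i : inWS y -> pos (y^T *m Pi i) -> (len y < len (s i *m y))%N.
Proof. by move=> Wy; apply: len_refl_gt => //; apply: posroot_simple. Qed.

Local Notation ble := (bruhat_le Rt Pi).
Local Notation bstep := (bruhat_step Rt Pi).

Lemma bruhat_step_refl y a : inWS y -> a \in Rt -> (len y < len (refl a *m y))%N ->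
  bstep y (refl a *m y).
Proof.
move=> Wy Ra lt_y; exists a; do 2!split => //; exists (len y), (len (refl a *m y)).
by split => //; apply: length_is_len => //; exact/inWS_mul/Wy/refl_root_inWS.
Qed.

Lemma bruhat_stepP u w : bstep u w -> [/\ inWS u, inWS w,
  exists2 a, a \in Rt & w = refl a *m u & (len u < len w)%N].
Proof.
case=> a [Ra [wE [ku [kw [lu lw lt_k]]]]].
split; [exact: length_is_inWS lu | exact: length_is_inWS lw | by exists a |].
by rewrite -(length_is_eq lu) -(length_is_eq lw).
Qed.

Lemma bruhat_le_inWS x y : ble x y -> inWS y -> inWS x.
Proof. by elim=> [u w /bruhat_stepP[]|//|x' y' z _ IHx _ IHy /IHy/IHx]. Qed.

Lemma bruhat_le_mulr_simple y j : inWS y -> (len y < len (y *m s j))%N ->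
  ble y (y *m s j).
Proof.
move=> Wy lt_y; rewrite mulr_simple_conj //; apply/rt_step/bruhat_step_refl => //.
  exact/inWS_root/Pi_root.
by rewrite -mulr_simple_conj.
Qed.

Lemma bruhat_subword x y om : ble x y -> (exists2 sg, subseq sg om & y = sprod sg) ->
  exists2 sg, subseq sg om & x = sprod sg.
Proof.
move=> le_xy; elim: le_xy om => [u w stp|//|x' y' z _ IHx _ IHy] om; last first.
  by move=> /IHy/IHx.
have [Wu Ww [a Ra wE] lt_uw] := bruhat_stepP stp.
have [b pb abE] := posroot_refl Ra.
have uE : u = refl b *m w by rewrite wE abE mulmxA reflK ?mul1mx ?root_neq0 ?pb.1.
have /(len_refl_lt_neg pb Ww) : (len (refl b *m w) < len w)%N by rewrite -uE.
move=> + [sg sub_sg wsg]; rewrite wsg => /(exchange pb) [w1 [i [w2 [sgE bwE]]]].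
exists (w1 ++ w2); last by rewrite uE wsg bwE.
apply: subseq_trans sub_sg; rewrite sgE; apply: cat_subseq => //; exact: subseq_cons.
Qed.

Lemma bruhat_step_mulr_simple u w j : bstep u w ->
  len (u *m s j) = (len u).+1 -> (len (w *m s j) < len (u *m s j))%N ->
  u *m s j = w.
Proof.
move=> stp lus lt_ws; have [Wu Ww [a Ra wE] lt_uw] := bruhat_stepP stp.
have lw : len w = (len (w *m s j)).+1.
  case: (len_mulr_simple j Ww) => // lws; move: lt_ws lt_uw; rewrite lws lus; lia.
have lws : len (w *m s j) = len u by move: lt_ws lt_uw; rewrite lus lw; lia.
have [rho [size_rho rhoE]] := reduced_word (inWS_mul Ww (inWS_simple j)).
have wrE : w = sprod (rcons rho j).
  by rewrite sprod_rcons -rhoE -mulmxA reflK_simple mulmx1.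
have [b pb abE] := posroot_refl Ra.
have uE : u = refl b *m w by rewrite wE abE mulmxA reflK ?mul1mx ?root_neq0 ?pb.1.
have /(len_refl_lt_neg pb Ww) : (len (refl b *m w) < len w)%N by rewrite -uE.
rewrite {1}wrE => /(exchange pb) [w1 [i [w2 []]]]; rewrite -wrE -uE.
case/lastP: w2 => [|w2 k].
  by rewrite cats1 cats0 => /rcons_inj[<- _] ->; rewrite wrE sprod_rcons.
rewrite -rcons_cons -rcons_cat => /rcons_inj[rhoE' <-] uE'; exfalso.
have usE : u *m s j = sprod (w1 ++ w2).
  by rewrite uE' -rcons_cat sprod_rcons -mulmxA reflK_simple mulmx1.
have := len_sprod (w1 ++ w2); rewrite -usE lus -lws -size_rho rhoE' !size_cat /=; lia.
Qed.

Lemma bruhat_lift x w j : ble x w -> inWS w ->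
  ble (x *m s j) w \/ ble (x *m s j) (w *m s j).
Proof.
elim=> {x w} [u w stp|x _|x y z le_xy IHx le_yz IHy Wz]; last 2 first.
- by right; apply: rt_refl.
- case: (IHx (bruhat_le_inWS le_yz Wz)) => le_x; first by left; apply: rt_trans le_x le_yz.
  by case: (IHy Wz) => le_y; [left|right]; apply: rt_trans le_x le_y.
have [Wu Ww [a Ra wE] lt_uw] := bruhat_stepP stp.
have Wus := inWS_mul Wu (inWS_simple j).
case: (len_mulr_simple j Wu) => lus _.
  have := len_refl_neq Ra Wus; rewrite mulmxA -wE.
  case: ltngtP => // [lt_ws|lt_us] _.
    by left; rewrite (bruhat_step_mulr_simple stp lus lt_ws); apply: rt_refl.
  right; rewrite wE -mulmxA; apply: rt_step; apply: bruhat_step_refl => //.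
  by rewrite mulmxA -wE.
left; apply: (rt_trans _ _ _ u); last exact: rt_step.
have {2}-> : u = u *m s j *m s j by rewrite -mulmxA reflK_simple mulmx1.
by apply: bruhat_le_mulr_simple; rewrite // -mulmxA reflK_simple mulmx1 lus.
Qed.

Lemma subseq_rcons_inv (T : eqType) (sg om : seq T) j : subseq sg (rcons om j) ->
  subseq sg om \/ exists2 sg', sg = rcons sg' j & subseq sg' om.
Proof.
rewrite -subseq_rev rev_rcons; case sgE: (rev sg) => [|x t].
  by move=> _; left; rewrite -(revK sg) sgE sub0seq.
rewrite /=; case: eqP => [<-|_] sub; last by left; rewrite -subseq_rev sgE.
right; exists (rev t); first by rewrite -(revK sg) sgE rev_cons.
by rewrite -subseq_rev revK.
Qed.

Lemma reduced_rcons w j : len (sprod (rcons w j)) = size (rcons w j) ->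
  len (sprod w) = size w /\ (len (sprod w) < len (sprod w *m s j))%N.
Proof.
move=> red; have le_w := len_sprod w.
have := len_mulr_simple_le j (inWS_sprod w).
rewrite -sprod_rcons red size_rcons ltnS => ge_w.
have wE : len (sprod w) = size w by apply/eqP; rewrite eqn_leq le_w.
by rewrite wE.
Qed.

Lemma bruhat_le_subword om sg : len (sprod om) = size om -> subseq sg om ->
  ble (sprod sg) (sprod om).
Proof.
elim/last_ind: om sg => [|om j IH] sg red.
  by rewrite subseq0 => /eqP ->; apply: rt_refl.
have [red_om lt_om] := reduced_rcons red.
have le_om : ble (sprod om) (sprod (rcons om j)).
  by rewrite sprod_rcons; apply: bruhat_le_mulr_simple => //; apply: inWS_sprod.
case/subseq_rcons_inv => [/(IH _ red_om) le_sg|[sg' -> /(IH _ red_om) le_sg]].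
  by apply: rt_trans le_sg le_om.
rewrite !sprod_rcons in le_om *; case: (bruhat_lift j le_sg (inWS_sprod om)) => // le.
by apply: rt_trans le le_om.
Qed.

Local Notation stab_word nu := (all (fun j => dot nu (Pi j) == 0)).

Lemma sprod_stab nu w : stab_word nu w -> sprod w *m nu = nu.
Proof.
elim: w => [|j w IH] /=; first by rewrite mul1mx.
by case/andP => /eqP nu_j /IH w_nu; rewrite sprod_cons -mulmxA w_nu refl_orth_fix // dotC.
Qed.

Definition in_spanI (I : {set 'I_l}) b :=
  exists d : 'I_l -> R, (forall m, m \notin I -> d m = 0) /\ b = \sum_m d m *: Pi m.

Lemma in_spanI_simple (I : {set 'I_l}) j : j \in I -> in_spanI I (Pi j).
Proof.
move=> jI; exists (fun m => if m == j then 1 else 0); split.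
  by move=> m; case: eqP => // -> /negP.
by rewrite sum_simple_delta scale1r.
Qed.

Lemma in_spanI_sprod (I : {set 'I_l}) w b : all (mem I) w -> in_spanI I b -> in_spanI I (sprod w *m b).
Proof.
elim: w => [|i w IH] /=; first by rewrite mul1mx.
case/andP => iI /IH{}IH /IH[d [dI bE]]; rewrite sprod_cons -mulmxA.
exists (fun m => d m - if m == i then 2 / dot (Pi i) (Pi i) *
                         dot (Pi i) (sprod w *m b) else 0); split; last first.
  exact: refl_simple_coord.
by move=> m mI; rewrite dI //; case: eqP => [mi|_]; [rewrite mi iI in mI | rewrite subr0].
Qed.

Lemma posrootI_of (I : {set 'I_l}) b : pos b -> in_spanI I b -> posrootI Rt Pi I b.
Proof.
move=> [Rb [c bE]] [d [dI bE']]; split => //; exists c; split => // m mI.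
have := simple_coord_inj (etrans (esym bE) bE') m; rewrite dI // => /eqP.
by rewrite pnatr_eq0 => /eqP.
Qed.

Lemma posrootI_posroot (I : {set 'I_l}) b : posrootI Rt Pi I b -> pos b.
Proof. by case=> Rb [c [_ bE]]; split; last exists c. Qed.

Lemma reduced_stab_word (I : {set 'I_l}) nu oz : (forall a, posrootI Rt Pi I a -> 0 <= dot nu a) ->
  all (mem I) oz -> len (sprod oz) = size oz -> sprod oz *m nu = nu -> stab_word nu oz.
Proof.
move=> nu_ge0; elim/last_ind: oz => [//|o j IH]; rewrite all_rcons => /andP[jI oI] red fixz.
have [red_o lt_o] := reduced_rcons red.
have zjE : sprod (rcons o j) *m Pi j = - (sprod o *m Pi j).
  by rewrite sprod_rcons -mulmxA refl_simple_root mulmxN.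
have nu_j : dot nu (Pi j) = 0.
  have : dot nu (sprod o *m Pi j) = - dot nu (Pi j).
    rewrite -[_ *m Pi j]opprK -zjE dotNr dotMr.
    by rewrite (orthomx_fix_tr (orthomx_sprod _) fixz).
  have := nu_ge0 _ (posrootI_of (posroot_simple j) (in_spanI_simple jI)).
  have := nu_ge0 _ (posrootI_of (posroot_len_mulr_simple (inWS_sprod o) lt_o)
                                (in_spanI_sprod oI (in_spanI_simple jI))).
  lra.
have fixo : sprod o *m nu = nu.
  have -> : sprod o = sprod (rcons o j) *m s j.
    by rewrite sprod_rcons -mulmxA reflK_simple mulmx1.
  by rewrite -mulmxA refl_orth_fix ?fixz // dotC.
by rewrite all_rcons nu_j eqxx IH.
Qed.

Lemma stab_reduced_word nu z : dominant Rt Pi nu -> inWS z -> z *m nu = nu ->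
  exists oz, [/\ z = sprod oz, size oz = len z & stab_word nu oz].
Proof.
move=> [_ nu_ge0] /reduced_word[oz [oz_len zE]] fixz; exists oz; split => //.
apply: (@reduced_stab_word [set: 'I_l]); rewrite -?zE //.
- by move=> a /posrootI_posroot; apply: nu_ge0.
- by apply/allP => j; rewrite inE.
Qed.

Definition min_rep nu x := inWS x /\ forall b, pos b -> dot nu b = 0 -> pos (x *m b).

Lemma len_min_rep_mul nu x oz : min_rep nu x -> stab_word nu oz ->
  len (sprod oz) = size oz -> len (x *m sprod oz) = (len x + size oz)%N.
Proof.
move=> [Wx x_pos]; elim/last_ind: oz => [|o j IH]; first by rewrite mulmx1 addn0.
rewrite all_rcons => /andP[/eqP nu_j stab_o] red.
have [red_o lt_o] := reduced_rcons red.
have nu_oj : dot nu (sprod o *m Pi j) = 0.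
  by rewrite dotMr (orthomx_fix_tr (orthomx_sprod o) (sprod_stab stab_o)).
have Wxo := inWS_mul Wx (inWS_sprod o).
have := x_pos _ (posroot_len_mulr_simple (inWS_sprod o) lt_o) nu_oj.
rewrite mulmxA => /(len_mulr_simple_gt Wxo); have := len_mulr_simple_le j Wxo.
by rewrite sprod_rcons mulmxA size_rcons addnS IH //; lia.
Qed.

Lemma min_rep_mul_stab nu x y : dominant Rt Pi nu -> min_rep nu x -> inWS y ->
  y *m nu = x *m nu ->
  exists oz, [/\ stab_word nu oz, y = x *m sprod oz & len y = (len x + size oz)%N].
Proof.
move=> dom_nu mx Wy yx; have Wx := mx.1.
have fixz : x^T *m y *m nu = nu by rewrite -mulmxA yx mulmxA inWS_trK // mul1mx.
have xzE : x *m (x^T *m y) = y by rewrite mulmxA inWS_mulKtr // mul1mx.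
have [oz [zE oz_len stab]] := stab_reduced_word dom_nu (inWS_mul (inWS_tr Wx) Wy) fixz.
exists oz; split => //; first by rewrite -xzE zE.
by rewrite -xzE zE (len_min_rep_mul mx stab) // -zE oz_len.
Qed.

Lemma min_rep_len_le nu x y : dominant Rt Pi nu -> min_rep nu x -> inWS y ->
  y *m nu = x *m nu -> (len x <= len y)%N.
Proof. by move=> dom_nu mx Wy /(min_rep_mul_stab dom_nu mx Wy) [oz [_ _ ->]]; rewrite leq_addr. Qed.

Lemma min_rep_eq nu x y : dominant Rt Pi nu -> min_rep nu x -> inWS y ->
  y *m nu = x *m nu -> (len y <= len x)%N -> y = x.
Proof.
move=> dom_nu mx Wy /(min_rep_mul_stab dom_nu mx Wy) [[|i oz] [_ -> ->]].
  by rewrite mulmx1.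
by rewrite /= addnS ltnNge leq_addr.
Qed.

Lemma min_rep_bruhat_le nu c y : dominant Rt Pi nu -> min_rep nu c -> inWS y ->
  y *m nu = c *m nu -> ble c y.
Proof.
move=> dom_nu mc Wy /(min_rep_mul_stab dom_nu mc Wy) [oz [_ yE ly]].
have [oc [oc_len cE]] := reduced_word mc.1.
have ocozE : y = sprod (oc ++ oz) by rewrite sprod_cat -cE.
rewrite ocozE {1}cE; apply: bruhat_le_subword; last exact: prefix_subseq.
by rewrite -ocozE ly size_cat oc_len.
Qed.

Lemma min_rep_of_len_min nu x : inWS x ->
  (forall y, inWS y -> y *m nu = x *m nu -> (len x <= len y)%N) -> min_rep nu x.
Proof.
move=> Wx x_min; split => // b pb nu_b.
case: (root_posVneg (inWS_root Wx pb.1)) => // nxb; exfalso.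
have Wxb := inWS_mul Wx (refl_posroot_inWS pb).
have xbE : x *m refl b = refl (- (x *m b)) *m x.
  by rewrite reflN (refl_conj _ (orthomx_inWS Wx)) -mulmxA inWS_trK // mulmx1.
have : (len (x *m refl b) < len x)%N.
  rewrite xbE; apply: len_refl_lt => //.
  by rewrite mulmxN mulmxA inWS_trK // mul1mx opprK.
by rewrite ltnNge x_min // -mulmxA refl_orth_fix // dotC.
Qed.

Lemma min_rep_exists nu y : inWS y -> exists x, min_rep nu x /\ x *m nu = y *m nu.
Proof.
move=> Wy.
have ex_k : exists k, `[< exists x, [/\ inWS x, x *m nu = y *m nu & len x = k] >].
  by exists (len y); apply/asboolP; exists y.
case: (ex_minnP ex_k) => k /asboolP[x [Wx xy <-]] k_min.
exists x; split => //; apply: min_rep_of_len_min => // z Wz zx.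
by apply: k_min; apply/asboolP; exists z; rewrite zx.
Qed.

Lemma subseq_cat_inv (T : eqType) (sg o1 o2 : seq T) : subseq sg (o1 ++ o2) ->
  exists sg1 sg2, [/\ sg = sg1 ++ sg2, subseq sg1 o1 & subseq sg2 o2].
Proof.
case/subseqP => m m_size ->.
exists (mask (take (size o1) m) o1), (mask (drop (size o1) m) o2).
split; rewrite ?mask_subseq // -mask_cat ?cat_take_drop //.
by rewrite size_takel // m_size size_cat leq_addr.
Qed.

Lemma min_rep_refl_simple nu a i : min_rep nu a -> dot (a *m nu) (Pi i) != 0 ->
  min_rep nu (s i *m a).
Proof.
move=> [Wa a_pos] nu_i; split => [|b pb nu_b]; first exact/inWS_mul/Wa/inWS_simple.
case: (root_posVneg (inWS_root (inWS_mul (inWS_simple i) Wa) pb.1)) => // nsab.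
rewrite -mulmxA in nsab.
have [k k0 abE] := posroot_refl_simple_neg (a_pos b pb nu_b) nsab.
move: nu_i; rewrite -(orthomx_dot _ _ (orthomx_inWS Wa)) abE dotZr in nu_b.
by move/eqP: nu_b; rewrite mulf_eq0 (negPf k0) => /eqP->; rewrite eqxx.
Qed.

Lemma min_rep_fix_simple nu v i : min_rep nu v -> dot (v *m nu) (Pi i) = 0 ->
  pos (v^T *m Pi i).
Proof.
move=> [Wv v_pos] nu_i; case: (root_posVneg (inWS_root (inWS_tr Wv) (Pi_root i))) => //.
move=> /v_pos; rewrite dotNr -dotMl nu_i oppr0 mulmxN mulmxA inWS_mulKtr // mul1mx.
by move=> /(_ erefl) /(posroot_opp (posroot_simple i)).
Qed.

Lemma bruhat_le_mull_simple a v i : ble a v -> inWS v -> pos (v^T *m Pi i) ->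
  ble (s i *m a) (s i *m v).
Proof.
move=> le_av Wv pv; have [ov [ov_len vE]] := reduced_word Wv.
have [sg sub_sg aE] := bruhat_subword le_av (ex_intro2 _ _ ov (subseq_refl ov) vE).
rewrite aE vE -!sprod_cons; apply: bruhat_le_subword; last by rewrite /= eqxx.
apply/eqP; rewrite eqn_leq len_sprod /= ov_len sprod_cons -vE.
exact: len_mull_simple_gt.
Qed.

Lemma bruhat_min_rep_proj nu v c z : dominant Rt Pi nu -> min_rep nu v ->
  min_rep nu c -> inWS z -> z *m nu = nu -> ble c (v *m z) -> ble c v.
Proof.
move=> dom_nu mv mc Wz fixz le_c.
have Wvz := inWS_mul mv.1 Wz.
have [oz [stab vzE lvz]] : exists oz, [/\ stab_word nu oz, v *m z = v *m sprod oz
                                          & len (v *m z) = (len v + size oz)%N].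
  by apply: min_rep_mul_stab; rewrite // -mulmxA fixz.
have [ov [ov_len vE]] := reduced_word mv.1.
have ovozE : v *m z = sprod (ov ++ oz) by rewrite sprod_cat -vE.
have [sg sub_sg cE] := bruhat_subword le_c (ex_intro2 _ _ (ov ++ oz) (subseq_refl _) ovozE).
have [sg1 [sg2 [sgE sub1 sub2]]] := subseq_cat_inv sub_sg.
have stab2 : stab_word nu sg2.
  by apply/allP => j /(mem_subseq sub2) /(allP stab).
have le_c1 : ble c (sprod sg1).
  apply: (min_rep_bruhat_le dom_nu mc (inWS_sprod sg1)).
  by rewrite cE sgE sprod_cat -mulmxA (sprod_stab stab2).
apply: rt_trans le_c1 _; rewrite vE; apply: bruhat_le_subword => //.
by rewrite -vE ov_len.
Qed.

Lemma min_rep_refl_simple_le nu v a i : dominant Rt Pi nu ->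
  min_rep nu v -> min_rep nu a -> dot (v *m nu) (Pi i) = 0 -> ble a v ->
  exists c, [/\ min_rep nu c, c *m nu = s i *m (a *m nu) & ble c v].
Proof.
move=> dom_nu mv ma nu_i le_av.
have [a_i|a_i] := eqVneq (dot (a *m nu) (Pi i)) 0.
  by exists a; rewrite refl_orth_fix // dotC.
exists (s i *m a); split; [exact: min_rep_refl_simple | by rewrite mulmxA |].
have Wv := mv.1; set z := v^T *m (s i *m v).
have vzE : v *m z = s i *m v by rewrite /z mulmxA inWS_mulKtr // mul1mx.
apply: (bruhat_min_rep_proj dom_nu mv (min_rep_refl_simple ma a_i)
          (inWS_mul (inWS_tr Wv) (inWS_mul (inWS_simple i) Wv))).
  rewrite /z -!mulmxA refl_orth_fix; last by rewrite dotC.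
  by rewrite mulmxA inWS_trK // mul1mx.
by rewrite vzE; apply: bruhat_le_mull_simple => //; apply: min_rep_fix_simple mv nu_i.
Qed.

Lemma simple_dual_exists : exists rho : 'cV[R]_n, forall i, dot (Pi i) rho = 1.
Proof.
pose A : 'M[R]_(l, n) := \matrix_(i, j) Pi i j 0.
have rowA i : row i A = (Pi i)^T by apply/matrixP => a b; rewrite !mxE (ord1 a).
have /row_freeP[B AB] : row_free A.
  rewrite -kermx_eq0; apply/rowV0P => v /sub_kermxP vA.
  apply/matrixP => a b; rewrite (ord1 a) mxE.
  apply: (simple_coord_eq0 (c := fun i => v 0 i)); apply: trmx_inj.
  rewrite trmx0 -vA mulmx_sum_row linear_sum.
  by apply: eq_bigr => i _; rewrite linearZ /= rowA.
exists (B *m const_mx 1) => i.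
by rewrite /dot -rowA mulmxA -row_mul AB row1 -rowE !mxE.
Qed.

Lemma dominant_simple nu : weight Rt nu -> (forall i, 0 <= dot nu (Pi i)) ->
  dominant Rt Pi nu.
Proof.
move=> Wnu nu_ge0; split => // _ [_ [c ->]]; rewrite dot_sumr; apply: sumr_ge0 => i _.
by rewrite dotZr mulr_ge0.
Qed.

Lemma weight_inWS y eta : inWS y -> weight Rt eta -> weight Rt (y *m eta).
Proof.
move=> Wy Weta a Ra; rewrite dotMl.
have := Weta _ (inWS_root (inWS_tr Wy) Ra).
by rewrite orthomx_dot //; apply/orthomx_tr/orthomx_inWS.
Qed.

Lemma intr_lt0_leN1 (m : R) : m \is a Num.int -> m < 0 -> m <= -1.
Proof.
case/intrP => z ->; rewrite ltrz0 => z_lt0.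
have z_le : (z <= -1)%R by lia.
by rewrite -(ler_int R) in z_le.
Qed.

Lemma refl_simple_dot_dual rho e i : (forall j, dot (Pi j) rho = 1) ->
  weight Rt e -> dot e (Pi i) < 0 -> dot e rho + 1 <= dot (s i *m e) rho.
Proof.
move=> rhoE We ei_lt0; set m := 2 * dot e (Pi i) / dot (Pi i) (Pi i).
have m_le : m <= -1.
  apply: intr_lt0_leN1; first exact/We/Pi_root.
  by rewrite /m pmulr_llt0 ?invr_gt0 ?dot_gt0 ?Pi_neq0 // pmulr_rlt0.
have -> : s i *m e = e - m *: Pi i by rewrite reflE /m dotC mulrAC.
by rewrite dotBl dotZl rhoE mulr1; lra.
Qed.

Lemma dominant_in_orbit eta : weight Rt eta ->
  exists x, inWS x /\ dominant Rt Pi (x *m eta).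
Proof.
move=> Weta; have [rho rhoE] := simple_dual_exists.
pose B := (dot eta eta + dot rho rho) / 2.
have dot_le e : dot e e = dot eta eta -> dot e rho <= B.
  by move=> eE; have := dot_ge0 (e - rho); rewrite dotBl !dotBr (dotC rho e) eE /B; lra.
suff : forall k e, weight Rt e -> dot e e = dot eta eta -> B - dot e rho < k%:R ->
    exists x, inWS x /\ dominant Rt Pi (x *m e).
  by move/(_ (Num.Def.archi_bound (B - dot eta rho)) eta Weta erefl); apply;
    rewrite archi_boundP // subr_ge0 dot_le.
elim=> [|k IH] e We eE; first by have := dot_le e eE; lra.
have [/forallP e_dom|] := boolP [forall i, 0 <= dot e (Pi i)].
  by exists 1%:M; split; [exists [::] | rewrite mul1mx; apply: dominant_simple].
case/forallPn => i; rewrite -ltNge => ei_lt0 k_lt.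
have [x [Wx dom_x]] : exists x, inWS x /\ dominant Rt Pi (x *m (s i *m e)).
  apply: IH; first exact/weight_inWS/We/inWS_simple.
    by rewrite orthomx_dot ?eE //; apply: orthomx_simple.
  by have := refl_simple_dot_dual rhoE We ei_lt0; move: k_lt; rewrite -natr1; lra.
by exists (x *m s i); rewrite -mulmxA; split => //; apply/inWS_mul/inWS_simple.
Qed.

Lemma lam_plus_spec eta : weight Rt eta -> is_plus Rt Pi eta (lam_plus Rt Pi eta).
Proof.
move=> Weta; have [x [Wx dom_x]] := dominant_in_orbit Weta.
apply: (epsilon_spec (inhabits 0) (is_plus Rt Pi eta)).
by exists (x *m eta); split => //; exists x => //; apply: inWS_inW.
Qed.

Lemma lam_plus_inWS y eta : inWS y -> lam_plus Rt Pi (y *m eta) = lam_plus Rt Pi eta.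
Proof.
move=> Wy; rewrite /lam_plus; congr epsilon; apply/funext => nu; apply/propext.
split=> -[dom_nu [x /inW_inWS Wx xE]]; split => //.
  by exists (x *m y); [exact/inWS_inW/inWS_mul | rewrite -mulmxA].
exists (x *m y^T); first exact/inWS_inW/inWS_mul/inWS_tr.
by rewrite -mulmxA (mulmxA y^T) inWS_trK // mul1mx.
Qed.

Lemma vbar_min_rep eta nu x : lam_plus Rt Pi eta = nu -> dominant Rt Pi nu ->
  min_rep nu x -> x *m nu = eta -> vbar Rt Pi eta = x.
Proof.
move=> nuE dom_nu mx xE.
have x_vbar : is_vbar Rt Pi eta x.
  split; [exact: inWS_inW mx.1 | by rewrite nuE |].
  exists (len x); split; first exact: length_is_len mx.1.
  move=> w /inW_inWS Ww wE k /length_is_eq ->.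
  by apply: (min_rep_len_le dom_nu mx Ww); rewrite -nuE wE nuE.
have [/inW_inWS Wv vE [k [/length_is_eq-> v_min]]] :=
  epsilon_spec (inhabits 1%:M) (is_vbar Rt Pi eta) (ex_intro _ x x_vbar).
apply: (min_rep_eq dom_nu mx Wv); first by rewrite -nuE vE nuE.
by apply: v_min (length_is_len mx.1); [exact: inWS_inW mx.1 | rewrite nuE].
Qed.

Lemma vbar_spec eta : weight Rt eta ->
  min_rep (lam_plus Rt Pi eta) (vbar Rt Pi eta) /\
  vbar Rt Pi eta *m lam_plus Rt Pi eta = eta.
Proof.
move=> Weta; have [dom_nu [x /inW_inWS Wx xE]] := lam_plus_spec Weta.
have [c [mc cE]] := min_rep_exists (lam_plus Rt Pi eta) (inWS_tr Wx).
have cE' : c *m lam_plus Rt Pi eta = eta by rewrite cE -xE mulmxA inWS_trK // mul1mx.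
by rewrite (vbar_min_rep erefl dom_nu mc cE').
Qed.

Lemma vbar_stab_word_le lam mu om : weight Rt lam -> weight Rt mu ->
  lam_plus Rt Pi mu = lam_plus Rt Pi lam -> ble (vbar Rt Pi mu) (vbar Rt Pi lam) ->
  stab_word lam om -> ble (vbar Rt Pi (sprod om *m mu)) (vbar Rt Pi lam).
Proof.
move=> Wlam Wmu nuE le_mu; have [dom_nu _] := lam_plus_spec Wlam.
have [mv vE] := vbar_spec Wlam.
elim: om => [|j om IH] /=; first by rewrite mul1mx.
case/andP => /eqP lam_j /IH le_om.
have [ma aE] := vbar_spec (weight_inWS (inWS_sprod om) Wmu).
rewrite (lam_plus_inWS _ (inWS_sprod om)) nuE in ma aE.
have lam_j' : dot (vbar Rt Pi lam *m lam_plus Rt Pi lam) (Pi j) = 0 by rewrite vE.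
have [c [mc cE le_c]] := min_rep_refl_simple_le dom_nu mv ma lam_j' le_om.
rewrite sprod_cons -mulmxA (vbar_min_rep _ dom_nu mc) ?cE ?aE //.
by rewrite (lam_plus_inWS _ (inWS_simple j)) (lam_plus_inWS _ (inWS_sprod om)).
Qed.

Lemma exchange_r w j : (len (sprod w *m s j) < len (sprod w))%N ->
  exists w1 i w2, w = w1 ++ i :: w2 /\ sprod w *m s j = sprod (w1 ++ w2).
Proof.
move=> lt_w; have Ww := inWS_sprod w.
have nwj : pos (- (sprod w *m Pi j)).
  case: (root_posVneg (inWS_root Ww (Pi_root j))) => // /(len_mulr_simple_gt Ww).
  by rewrite ltnNge ltnW.
rewrite mulr_simple_conj // -reflN; apply: exchange => //.
by rewrite mulmxN opprK mulmxA inWS_trK // mul1mx; apply: posroot_simple.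
Qed.

Lemma reduced_subword om :
  exists sg, [/\ subseq sg om, sprod om = sprod sg & len (sprod sg) = size sg].
Proof.
elim/last_ind: om => [|om j [sg [sub_sg omE red]]].
  by exists [::]; split => //; apply/eqP; rewrite -leqn0 (len_sprod [::]).
case: (len_mulr_simple j (inWS_sprod sg)) => [up|down].
  exists (rcons sg j); rewrite !sprod_rcons omE up red size_rcons.
  by split => //; rewrite -!cats1 cat_subseq.
have [|w1 [i [w2 [sgE del]]]] := @exchange_r sg j; first by rewrite down.
exists (w1 ++ w2); split.
- apply: subseq_trans (subseq_rcons om j); apply: subseq_trans sub_sg.
  by rewrite sgE; apply: cat_subseq => //; apply: subseq_cons.
- by rewrite sprod_rcons omE del.
- by apply/eqP; rewrite -del -eqSS -down red sgE !size_cat /= addnS.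
Qed.

Lemma stab_WI_word (I : {set 'I_l}) lam w : PIplus Rt Pi I lam -> inWI Pi I w ->
  w *m lam = lam -> exists om, stab_word lam om /\ w = sprod om.
Proof.
move=> [_ lam_ge0] [om omI ->] fixw.
have [sg [sub_sg omE red]] := reduced_subword om.
exists sg; split; last exact: omE.
apply: (reduced_stab_word lam_ge0) => //; last by rewrite -omE.
by apply/allP => j /(mem_subseq sub_sg) /(allP omI).
Qed.

End RootSystem.

Theorem mainTheorem4 (R : realType) (n l : nat)
    (Rt : seq 'cV[R]_n) (Pi : 'I_l -> 'cV[R]_n) (I : {set 'I_l})
    (lam mu : 'cV[R]_n) :
  root_system Rt -> base Rt Pi ->
  PIplus Rt Pi I lam -> weight Rt mu ->
  lt0 Rt Pi mu lam ->
  forall w : 'M[R]_n, inWI Pi I w -> w *m lam = lam ->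
    lt0 Rt Pi (w *m mu) lam.
Proof.
move=> Rt_rs Pi_base lam_I Wmu [[Q_mu le_mu] mu_neq] w WIw fixw.
have [om [stab ->]] := stab_WI_word Rt_rs Pi_base lam_I WIw fixw.
have plusE := lam_plus_inWS Rt_rs Pi_base mu (inWS_sprod Pi om).
split.
  split; rewrite plusE // => nuE.
  exact: vbar_stab_word_le Rt_rs Pi_base _ _ _ lam_I.1 Wmu nuE (le_mu nuE) stab.
move=> omE; apply: mu_neq; have o_om := orthomx_sprod Rt_rs Pi_base om.
by rewrite -[mu]mul1mx -o_om -mulmxA omE (orthomx_fix_tr o_om (sprod_stab stab)).
Qed.
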